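(* The function $f(x)=\sum_{n\geq 0}\frac{1}{(n+1)^2}\sum_{i=0}^{2^n-1}\sigma_{n,i}(x)$ on $[0,1]$ is completely non-Hölder.
   Context: The Faber–Schauder functions: $\sigma_{0,0}(x)=0$ for $x\le 0$ or $x\ge 1$, $\sigma_{0,0}(x)=2x$ for $0\le x\le \frac12$, $\sigma_{0,0}(x)=2-2x$ for $\frac12\le x\le 1$; and for $n\ge 0$, $0\le i\le 2^n-1$, $\sigma_{n,i}(x)=\sigma_{0,0}(2^nx-i)$. For $\alpha>0$, a function $g:[0,1]\to\mathbb{R}$ is called $\alpha$-Hölder at $x_0$ from the right if $\limsup_{y\searrow x_0}\frac{|g(y)-g(x_0)|}{|y-x_0|^\alpha}<\infty$, and $\alpha$-Hölder at $x_0$ from the left if $\limsup_{y\nearrow x_0}\frac{|g(y)-g(x_0)|}{|y-x_0|^\alpha}<\infty$. The function $g$ is called completely non-Hölder if there is no $x_0\in[0,1]$ and no $\alpha>0$ such that $g$ is $\alpha$-Hölder at $x_0$ from the left or from the right. *)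

From Stdlib Require Import Reals.
From Coquelicot Require Import Coquelicot.
Open Scope R_scope.

Definition sigma00 (x : R) : R :=
  if Rle_dec x 0 then 0
  else if Rle_dec 1 x then 0
  else if Rle_dec x (1/2) then 2 * x
  else 2 - 2 * x.

Definition sigma (n i : nat) (x : R) : R := sigma00 (2 ^ n * x - INR i).

Definition f_term (x : R) (n : nat) : R :=
  / (INR n + 1) ^ 2 * sum_f_R0 (fun i => sigma n i x) (2 ^ n - 1)%nat.

Definition fFS (x : R) : R := Series (f_term x).

(* limsup_{y \searrow x0, y in [0,1]} |g y - g x0| / |y - x0|^alpha < +oo,
   unfolded: the ratio is eventually bounded above. *)
Definition holder_right (g : R -> R) (alpha x0 : R) : Prop :=
  exists M delta, 0 < delta /\
    forall y, x0 < y < x0 + delta -> y <= 1 ->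
      Rabs (g y - g x0) / Rpower (Rabs (y - x0)) alpha <= M.

Definition holder_left (g : R -> R) (alpha x0 : R) : Prop :=
  exists M delta, 0 < delta /\
    forall y, x0 - delta < y < x0 -> 0 <= y ->
      Rabs (g y - g x0) / Rpower (Rabs (y - x0)) alpha <= M.

(* One-sided Hölder conditions only make sense where the side exists inside
   [0,1]: from the right at x0 in [0,1), from the left at x0 in (0,1]. *)
Definition completely_non_Holder (g : R -> R) : Prop :=
  ~ exists x0 alpha, 0 < alpha /\
      ((0 <= x0 < 1 /\ holder_right g alpha x0) \/
       (0 < x0 <= 1 /\ holder_left g alpha x0)).

(* For a dyadic cell [a, b] of level m,
   a = k/2^m and b = (k+1)/2^m, the second difference
       f(a) + f(b) - 2 f((a+b)/2)
   equals -2/(m+1)^2: every level n < m is affine on the cell (the tent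
   function is affine on half-integer cells), every level n > m vanishes at
   the three points (they are integers after scaling by 2^n), and level m
   vanishes at a, b and equals 1 at the midpoint.

   On the other hand, if f is α-Hölder at x0 from one side with constant M,
   then for every large m some dyadic cell of level m lies on that side
   within distance 4/2^m of x0, so the second difference over it is at most
   4 M (4/2^m)^α in absolute value.  Since 2^(αm) grows faster than (m+1)^2
   the two estimates contradict each other. *)

From Pilot Require Import Defs.
From Stdlib Require Import Reals Lra Lia ZArith.
From Coquelicot Require Import Coquelicot.
Open Scope R_scope.

(** * Second differences *)

(* The second difference of g over [a, b] through the midpoint; it vanishes
   whenever g is affine on [a, b]. *)
Definition second_diff (g : R -> R) (a b : R) : R :=
  g a + g b - 2 * g ((a + b) / 2).

Lemma second_diff_sum (h : nat -> R -> R) (N : nat) (a b : R) :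
  second_diff (fun x => sum_f_R0 (fun i => h i x) N) a b
  = sum_f_R0 (fun i => second_diff (h i) a b) N.
Proof.
  unfold second_diff; induction N as [|N IH]; simpl; [reflexivity|].
  rewrite <- IH; ring.
Qed.

(* Affine changes of variable preserve midpoints. *)
Lemma second_diff_affine (g : R -> R) (c d a b : R) :
  second_diff (fun x => g (c * x - d)) a b
  = second_diff g (c * a - d) (c * b - d).
Proof.
  unfold second_diff.
  replace ((c * a - d + (c * b - d)) / 2) with (c * ((a + b) / 2) - d)
    by field.
  reflexivity.
Qed.

Lemma second_diff_Series (u : R -> nat -> R) (a b : R) :
  ex_series (u a) -> ex_series (u b) -> ex_series (u ((a + b) / 2)) ->
  second_diff (fun x => Series (u x)) a b
  = Series (fun n => second_diff (fun x => u x n) a b).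
Proof.
  intros Ha Hb Hc; unfold second_diff.
  rewrite Series_minus, Series_plus, Series_scal_l;
    try assumption; try reflexivity.
  - apply (ex_series_plus (K := R_AbsRing) (V := R_NormedModule)); assumption.
  - apply (ex_series_scal (K := R_AbsRing) (V := R_NormedModule)); assumption.
Qed.

Lemma second_diff_oscillation_bound (g : R -> R) (x0 a b K : R) :
  Rabs (g a - g x0) <= K -> Rabs (g b - g x0) <= K ->
  Rabs (g ((a + b) / 2) - g x0) <= K ->
  Rabs (second_diff g a b) <= 4 * K.
Proof.
  intros Ha Hb Hc.
  apply Rabs_le_between in Ha, Hb, Hc.
  apply Rabs_le; unfold second_diff; lra.
Qed.

Lemma sum_f_R0_single (u : nat -> R) (m N : nat) :
  (m <= N)%nat -> (forall n, n <> m -> u n = 0) -> sum_f_R0 u N = u m.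
Proof.
  intros HmN Hu; induction N as [|N IH].
  - replace m with 0%nat by lia; reflexivity.
  - rewrite tech5; destruct (Nat.eq_dec m (S N)) as [->|Hne].
    + rewrite sum_eq_R0; [ring|]; intros n Hn; apply Hu; lia.
    + rewrite IH, (Hu (S N)) by lia; ring.
Qed.

Lemma Series_single (u : nat -> R) (m : nat) :
  (forall n, n <> m -> u n = 0) -> Series u = u m.
Proof.
  intros Hu; apply is_series_unique, is_series_Reals.
  intros eps Heps; exists m; intros n Hn.
  rewrite (sum_f_R0_single u m n Hn Hu), Rdist_eq; lra.
Qed.

Lemma sigma00_nonpos (s : R) : s <= 0 -> sigma00 s = 0.
Proof. intros Hs; unfold sigma00; destruct (Rle_dec s 0); lra. Qed.

Lemma sigma00_ge1 (s : R) : 1 <= s -> sigma00 s = 0.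
Proof.
  intros Hs; unfold sigma00.
  destruct (Rle_dec s 0); [reflexivity|]; destruct (Rle_dec 1 s); lra.
Qed.

Lemma sigma00_half : sigma00 (/ 2) = 1.
Proof. unfold sigma00; repeat destruct (Rle_dec _ _); lra. Qed.

Lemma sigma00_range (s : R) : 0 <= sigma00 s <= 1.
Proof. unfold sigma00; repeat destruct (Rle_dec _ _); lra. Qed.

Lemma sigma00_integer (z : Z) : sigma00 (IZR z) = 0.
Proof.
  destruct (Z_le_gt_dec z 0) as [Hz|Hz].
  - apply sigma00_nonpos, IZR_le, Hz.
  - apply sigma00_ge1, IZR_le; lia.
Qed.

Lemma sigma00_affine_on_half_cell (z : Z) (s1 s3 : R) :
  IZR z / 2 <= s1 -> s1 <= s3 -> s3 <= (IZR z + 1) / 2 ->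
  second_diff sigma00 s1 s3 = 0.
Proof.
  intros H1 H2 H3; unfold second_diff.
  destruct (Z_lt_le_dec z 0) as [Hneg|Hnn].
  - assert (IZR z <= -1) by (apply IZR_le; lia).
    rewrite !sigma00_nonpos; lra.
  - destruct (Z_le_gt_dec z 1) as [Hle1|Hgt1].
    + assert (z = 0 \/ z = 1)%Z as [->| ->] by lia; simpl in *;
        unfold sigma00; repeat destruct (Rle_dec _ _); lra.
    + assert (2 <= IZR z) by (apply IZR_le; lia).
      rewrite !sigma00_ge1; lra.
Qed.

(* Integer translates of the tent function have disjoint supports, so their
   partial sums take values in [0, 1]. *)
Lemma tent_sum_range (K : nat) (t : R) :
  0 <= sum_f_R0 (fun i => sigma00 (t - INR i)) K <= 1.
Proof.
  induction K as [|K IH]; [apply sigma00_range|]; rewrite tech5.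
  destruct (Rle_dec t (INR (S K))) as [Ht|Ht].
  - rewrite (sigma00_nonpos (t - INR (S K))) by lra; lra.
  - rewrite sum_eq_R0.
    + pose proof (sigma00_range (t - INR (S K))); lra.
    + intros i Hi; apply sigma00_ge1.
      apply le_INR in Hi; rewrite S_INR in Ht; lra.
Qed.

(* At a half-integer k + 1/2 only the k-th translate is nonzero. *)
Lemma tent_sum_half_integer (K k : nat) :
  (k <= K)%nat -> sum_f_R0 (fun i => sigma00 (INR k + / 2 - INR i)) K = 1.
Proof.
  intros Hk; rewrite (sum_f_R0_single _ k K Hk).
  - replace (INR k + / 2 - INR k) with (/ 2) by ring; apply sigma00_half.
  - intros i Hi; destruct (Nat.lt_ge_cases i k) as [Hlt|Hge].
    + apply sigma00_ge1; apply le_INR in Hlt; rewrite S_INR in Hlt; lra.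
    + apply sigma00_nonpos.
      assert (Hlt : (k < i)%nat) by lia.
      apply le_INR in Hlt; rewrite S_INR in Hlt; lra.
Qed.

Lemma INR_two : INR 2 = 2.
Proof. simpl; ring. Qed.

Definition level (n : nat) (x : R) : R :=
  sum_f_R0 (fun i => Defs.sigma n i x) (2 ^ n - 1).

Lemma level_range (n : nat) (x : R) : 0 <= level n x <= 1.
Proof. unfold level, Defs.sigma; apply tent_sum_range. Qed.

Lemma level_on_grid (n m j : nat) :
  (m <= n)%nat -> level n (INR j / 2 ^ m) = 0.
Proof.
  intros Hmn; apply sum_eq_R0; intros i _; unfold Defs.sigma.
  replace (2 ^ n * (INR j / 2 ^ m) - INR i)
    with (IZR (Z.of_nat (j * 2 ^ (n - m)) - Z.of_nat i)).
  - apply sigma00_integer.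
  - rewrite minus_IZR, <- !INR_IZR_INZ, mult_INR, pow_INR.
    replace n with (m + (n - m))%nat at 2 by lia.
    rewrite pow_add, INR_two; field; apply pow_nonzero; lra.
Qed.

Lemma level_at_half_grid (m k : nat) :
  (S k <= 2 ^ m)%nat -> level m (INR (2 * k + 1) / 2 ^ S m) = 1.
Proof.
  intros Hk; unfold level, Defs.sigma.
  rewrite (sum_eq _ (fun i => sigma00 (INR k + / 2 - INR i))).
  - apply tent_sum_half_integer; lia.
  - intros i _; f_equal.
    rewrite plus_INR, mult_INR, INR_two; simpl (INR 1); simpl pow.
    field; apply pow_nonzero; lra.
Qed.

Lemma dyadic_cell_in_half_cell (e k : nat) :
  exists z : Z, IZR z / 2 <= INR k / 2 ^ S e /\
                (INR k + 1) / 2 ^ S e <= (IZR z + 1) / 2.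
Proof.
  set (q := (k / 2 ^ e)%nat).
  assert (He : (2 ^ e <> 0)%nat) by (apply Nat.pow_nonzero; lia).
  assert (Hlo : (2 ^ e * q <= k)%nat) by apply Nat.Div0.mul_div_le.
  assert (Hhi : (k + 1 <= 2 ^ e * (q + 1))%nat).
  { pose proof (Nat.div_mod k (2 ^ e) He).
    pose proof (Nat.mod_upper_bound k (2 ^ e) He); unfold q; nia. }
  apply le_INR in Hlo, Hhi.
  rewrite mult_INR, pow_INR in Hlo, Hhi; rewrite !plus_INR in Hhi.
  rewrite INR_two in Hlo, Hhi; simpl (INR 1) in Hhi.
  assert (Hpos : 0 < 2 ^ e) by (apply pow_lt; lra).
  exists (Z.of_nat q); rewrite <- INR_IZR_INZ; simpl pow; split.
  - rewrite <- Rle_div_r by lra.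
    replace (INR q / 2 * (2 * 2 ^ e)) with (2 ^ e * INR q) by field; lra.
  - rewrite Rle_div_l by lra.
    replace ((INR q + 1) / 2 * (2 * 2 ^ e)) with (2 ^ e * (INR q + 1))
      by field; lra.
Qed.

Lemma level_second_diff_coarse (n m k : nat) :
  (n < m)%nat -> second_diff (level n) (INR k / 2 ^ m) (INR (S k) / 2 ^ m) = 0.
Proof.
  intros Hnm; unfold level, Defs.sigma.
  rewrite second_diff_sum; apply sum_eq_R0; intros i _.
  rewrite (second_diff_affine sigma00).
  destruct (dyadic_cell_in_half_cell (m - n - 1) k) as [z [Hz1 Hz2]].
  assert (Hscale : forall x : R, 2 ^ n * (x / 2 ^ m) = x / 2 ^ S (m - n - 1)).
  { intro x; replace m with (n + S (m - n - 1))%nat at 1 by lia.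
    rewrite pow_add; field; split; apply pow_nonzero; lra. }
  assert (Hpos : 0 < 2 ^ S (m - n - 1)) by (apply pow_lt; lra).
  rewrite !Hscale, S_INR.
  apply (sigma00_affine_on_half_cell (z - 2 * Z.of_nat i));
    rewrite ?minus_IZR, ?mult_IZR, <- ?INR_IZR_INZ; simpl (IZR 2).
  - lra.
  - apply Rplus_le_compat_r, Rmult_le_compat_r; [|lra].
    now apply Rlt_le, Rinv_0_lt_compat.
  - lra.
Qed.

Lemma inv_square_partial_sums (N : nat) :
  sum_f_R0 (fun n => / (INR n + 1) ^ 2) N <= 2 - / (INR N + 1).
Proof.
  induction N as [|N IH]; [simpl; lra|].
  rewrite tech5, S_INR; pose proof (pos_INR N).
  assert (/ (INR N + 1 + 1) ^ 2 <= / (INR N + 1) - / (INR N + 1 + 1)).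
  { replace (/ (INR N + 1) - / (INR N + 1 + 1))
      with (/ ((INR N + 1) * (INR N + 1 + 1))) by (field; lra).
    apply Rinv_le_contravar; nra. }
  lra.
Qed.

Lemma ex_series_inv_square : ex_series (fun n => / (INR n + 1) ^ 2).
Proof.
  apply ex_series_Reals_1, growing_cv.
  - intro n; rewrite tech5.
    assert (0 < / (INR (S n) + 1) ^ 2).
    { apply Rinv_0_lt_compat, pow_lt; pose proof (pos_INR (S n)); lra. }
    lra.
  - exists 2; intros y [N ->].
    pose proof (inv_square_partial_sums N).
    assert (0 < / (INR N + 1)).
    { apply Rinv_0_lt_compat; pose proof (pos_INR N); lra. }
    lra.
Qed.

Lemma ex_series_f_term (x : R) : ex_series (f_term x).
Proof.
  apply (ex_series_le (K := R_AbsRing) (V := R_CompleteNormedModule))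
    with (b := fun n => / (INR n + 1) ^ 2); [|exact ex_series_inv_square].
  intro n; change norm with Rabs; change (f_term x n) with
    (/ (INR n + 1) ^ 2 * level n x).
  assert (Hc : 0 < / (INR n + 1) ^ 2).
  { apply Rinv_0_lt_compat, pow_lt; pose proof (pos_INR n); lra. }
  pose proof (level_range n x).
  rewrite Rabs_pos_eq by nra; nra.
Qed.

(** * The second difference of f over a dyadic cell *)

Lemma second_diff_f_term (n : nat) (a b : R) :
  second_diff (fun x => f_term x n) a b
  = / (INR n + 1) ^ 2 * second_diff (level n) a b.
Proof. unfold second_diff, f_term, level; ring. Qed.

Lemma dyadic_midpoint (m k : nat) :
  (INR k / 2 ^ m + INR (S k) / 2 ^ m) / 2 = INR (2 * k + 1) / 2 ^ S m.
Proof.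
  rewrite S_INR, plus_INR, mult_INR, INR_two; simpl (INR 1); simpl pow.
  field; apply pow_nonzero; lra.
Qed.

(* Only level m contributes, with -2/(m+1)^2. *)
Theorem second_diff_fFS_dyadic (m k : nat) :
  (S k <= 2 ^ m)%nat ->
  second_diff fFS (INR k / 2 ^ m) (INR (S k) / 2 ^ m) = - 2 / (INR m + 1) ^ 2.
Proof.
  intros Hk; unfold fFS.
  rewrite (second_diff_Series f_term) by apply ex_series_f_term.
  rewrite (Series_single _ m).
  - rewrite second_diff_f_term; unfold second_diff.
    rewrite dyadic_midpoint, !level_on_grid, level_at_half_grid by
      (assumption || lia).
    field; pose proof (pos_INR m); lra.
  - intros n Hn; rewrite second_diff_f_term.
    destruct (proj1 (Nat.lt_gt_cases n m) Hn) as [Hlt|Hgt].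
    + rewrite level_second_diff_coarse by assumption; ring.
    + unfold second_diff.
      rewrite dyadic_midpoint, !level_on_grid by lia; ring.
Qed.

Lemma eventually_INR_gt (r : R) : eventually (fun m : nat => r < INR m).
Proof.
  destruct (nfloor_ex (Rabs r) (Rabs_pos r)) as [n Hn].
  exists (S n); intros m Hm.
  apply le_INR in Hm; rewrite S_INR in Hm; pose proof (Rle_abs r); lra.
Qed.

Lemma pow2_power_dominates_square (alpha C : R) :
  0 < alpha ->
  eventually (fun m : nat => C * (INR m + 1) ^ 2 < Rpower (2 ^ m) alpha).
Proof.
  intros Halpha.
  assert (Hln2 : 0 < ln 2) by (rewrite <- ln_1; apply ln_increasing; lra).
  set (t := alpha * ln 2); assert (Ht : 0 < t) by (unfold t; nra).
  set (C' := Rmax C 0).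
  assert (HC : C <= C' /\ 0 <= C') by (split; [apply Rmax_l | apply Rmax_r]).
  apply filter_imp with (2 := eventually_INR_gt (Rmax 1 (24 * C' / t ^ 3))).
  intros m Hm; set (x := INR m) in *.
  assert (Hx1 : 1 < x) by (pose proof (Rmax_l 1 (24 * C' / t ^ 3)); lra).
  assert (Ht3 : 0 < t ^ 3) by (apply pow_lt, Ht).
  assert (HxC : 24 * C' < t ^ 3 * x).
  { assert (Hthr : 24 * C' / t ^ 3 < x)
      by (pose proof (Rmax_r 1 (24 * C' / t ^ 3)); lra).
    rewrite Rlt_div_l in Hthr by lra; lra. }
  assert (Hexp : (t * x) ^ 3 / 6 <= Rpower (2 ^ m) alpha).
  { unfold Rpower; rewrite ln_pow by lra; fold x.
    replace (alpha * (x * ln 2)) with (t * x) by (unfold t; ring).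
    pose proof (exp_ge_taylor (t * x) 3 ltac:(nra)) as Htaylor.
    simpl in Htaylor; assert (0 <= t * x) by nra; nra. }
  assert (Hsq : (x + 1) ^ 2 <= 4 * x ^ 2) by nra.
  assert (C * (x + 1) ^ 2 <= C' * (x + 1) ^ 2)
    by (apply Rmult_le_compat_r; [apply pow2_ge_0 | lra]).
  assert (C' * (x + 1) ^ 2 <= C' * (4 * x ^ 2))
    by (apply Rmult_le_compat_l; lra).
  assert (24 * C' * x ^ 2 < t ^ 3 * x * x ^ 2)
    by (apply Rmult_lt_compat_r; [apply pow_lt|]; lra).
  replace ((t * x) ^ 3 / 6) with (t ^ 3 * x * x ^ 2 / 6) in Hexp by field.
  lra.
Qed.

Lemma dyadic_scale_small (eps : R) :
  0 < eps -> eventually (fun m : nat => 4 / 2 ^ m < eps).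
Proof.
  intros Heps.
  apply filter_imp with (2 := pow2_power_dominates_square 1 (4 / eps) Rlt_0_1).
  intros m Hm; rewrite Rpower_1 in Hm by (apply pow_lt; lra).
  pose proof (pos_INR m).
  assert (Hq : 4 / eps <= 4 / eps * (INR m + 1) ^ 2).
  { assert (0 < 4 / eps) by (apply Rdiv_lt_0_compat; lra). nra. }
  rewrite Rlt_div_l by (apply pow_lt; lra).
  apply (Rmult_lt_reg_r (/ eps)); [apply Rinv_0_lt_compat, Heps|].
  replace (eps * 2 ^ m * / eps) with (2 ^ m) by (field; lra); lra.
Qed.

(** * From one-sided Hölder bounds to flat dyadic cells *)

Lemma holder_increment_bound (g : R -> R) (x0 y alpha M L : R) :
  0 < alpha -> 0 < Rabs (y - x0) <= L ->
  Rabs (g y - g x0) / Rpower (Rabs (y - x0)) alpha <= M ->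
  Rabs (g y - g x0) <= M * Rpower L alpha.
Proof.
  intros Halpha Hy Hratio.
  set (P := Rpower (Rabs (y - x0)) alpha) in *.
  assert (HP : 0 < P) by apply exp_pos.
  assert (HPL : P <= Rpower L alpha) by (apply Rle_Rpower_l; lra).
  rewrite Rle_div_l in Hratio by lra.
  assert (0 <= M).
  { apply (Rmult_le_reg_r P); [lra|]; pose proof (Rabs_pos (g y - g x0)); lra. }
  pose proof (Rmult_le_compat_l M _ _ ltac:(assumption) HPL); lra.
Qed.

Definition flat_dyadic_cell (g : R -> R) (x0 alpha M : R) (m : nat) : Prop :=
  exists k : nat, (S k <= 2 ^ m)%nat /\
    forall y, INR k / 2 ^ m <= y <= INR (S k) / 2 ^ m ->
      Rabs (g y - g x0) <= M * Rpower (4 / 2 ^ m) alpha.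

Lemma Rpower_div (x y z : R) :
  0 < x -> 0 < y -> Rpower (x / y) z = Rpower x z / Rpower y z.
Proof.
  intros Hx Hy; unfold Rpower; rewrite ln_div by assumption.
  replace (z * (ln x - ln y)) with (z * ln x + - (z * ln y)) by ring.
  rewrite exp_plus, exp_Ropp; reflexivity.
Qed.

Lemma fFS_not_eventually_flat (x0 alpha M : R) :
  0 < alpha -> ~ eventually (flat_dyadic_cell fFS x0 alpha M).
Proof.
  intros Halpha Hflat.
  destruct (filter_and _ _ Hflat
    (pow2_power_dominates_square alpha (2 * M * Rpower 4 alpha) Halpha))
    as [m Hm].
  destruct (Hm m (le_n m)) as [[k [Hk Hcell]] Hdom]; clear Hm Hflat.
  assert (Hab : INR k / 2 ^ m <= INR (S k) / 2 ^ m).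
  { apply Rmult_le_compat_r; [apply Rlt_le, Rinv_0_lt_compat, pow_lt; lra|].
    apply le_INR; lia. }
  pose proof (second_diff_oscillation_bound fFS x0 _ _ _
    (Hcell _ (conj (Rle_refl _) Hab)) (Hcell _ (conj Hab (Rle_refl _)))
    (Hcell ((INR k / 2 ^ m + INR (S k) / 2 ^ m) / 2) ltac:(split; lra)))
    as Hbound.
  rewrite second_diff_fFS_dyadic in Hbound by assumption.
  rewrite Rpower_div in Hbound by (try apply pow_lt; lra).
  apply Rabs_le_between in Hbound; destruct Hbound as [Hbound _].
  set (q := (INR m + 1) ^ 2) in *; set (P := Rpower (2 ^ m) alpha) in *.
  assert (Hq : 0 < q) by (apply pow_lt; pose proof (pos_INR m); lra).
  assert (HP : 0 < P) by apply exp_pos.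
  assert (H2 : 2 / q * (q * P) <= 4 * (M * (Rpower 4 alpha / P)) * (q * P))
    by (apply Rmult_le_compat_r; nra).
  replace (2 / q * (q * P)) with (2 * P) in H2 by (field; lra).
  replace (4 * (M * (Rpower 4 alpha / P)) * (q * P))
    with (2 * (2 * M * Rpower 4 alpha * q)) in H2 by (field; lra).
  lra.
Qed.

Lemma dyadic_cell_inside (lo hi : R) (m : nat) :
  0 <= lo -> hi <= 1 -> lo + 2 / 2 ^ m <= hi ->
  exists k : nat, (S k <= 2 ^ m)%nat /\
    lo < INR k / 2 ^ m /\ INR (S k) / 2 ^ m <= hi.
Proof.
  intros Hlo Hhi Hlen.
  assert (HP : 0 < 2 ^ m) by (apply pow_lt; lra).
  assert (Hlen' : lo * 2 ^ m + 2 <= hi * 2 ^ m).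
  { apply (Rmult_le_compat_r (2 ^ m)) in Hlen; [|lra].
    replace ((lo + 2 / 2 ^ m) * 2 ^ m) with (lo * 2 ^ m + 2) in Hlen
      by (field; lra); exact Hlen. }
  destruct (archimed (lo * 2 ^ m)) as [Hu1 Hu2].
  assert (Hu0 : (0 < up (lo * 2 ^ m))%Z) by (apply lt_IZR; nra).
  exists (Z.to_nat (up (lo * 2 ^ m))).
  rewrite S_INR, INR_IZR_INZ, Z2Nat.id by lia.
  split; [|split].
  - apply INR_le; rewrite S_INR, INR_IZR_INZ, Z2Nat.id, pow_INR by lia.
    rewrite INR_two; nra.
  - rewrite <- Rlt_div_r by lra; lra.
  - rewrite Rle_div_l by lra; lra.
Qed.

Lemma holder_right_eventually_flat (g : R -> R) (alpha x0 : R) :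
  0 < alpha -> 0 <= x0 < 1 -> holder_right g alpha x0 ->
  exists M, eventually (flat_dyadic_cell g x0 alpha M).
Proof.
  intros Halpha Hx [M [delta [Hdelta Hhol]]]; exists M.
  apply filter_imp with (2 := dyadic_scale_small (Rmin delta (1 - x0))
    ltac:(apply Rmin_glb_lt; lra)).
  intros m Hm; pose proof (Rmin_l delta (1 - x0)); pose proof (Rmin_r delta (1 - x0)).
  assert (HP : 0 < / 2 ^ m) by (apply Rinv_0_lt_compat, pow_lt; lra).
  destruct (dyadic_cell_inside x0 (x0 + 2 / 2 ^ m) m) as [k [Hk [Ha Hb]]];
    [lra | unfold Rdiv in *; lra | lra |].
  exists k; split; [exact Hk|]; intros y Hy.
  apply (holder_increment_bound g x0 y alpha M); [exact Halpha| |].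
  - rewrite Rabs_pos_eq by lra; unfold Rdiv in *; lra.
  - apply Hhol; unfold Rdiv in *; lra.
Qed.

Lemma holder_left_eventually_flat (g : R -> R) (alpha x0 : R) :
  0 < alpha -> 0 < x0 <= 1 -> holder_left g alpha x0 ->
  exists M, eventually (flat_dyadic_cell g x0 alpha M).
Proof.
  intros Halpha Hx [M [delta [Hdelta Hhol]]]; exists M.
  apply filter_imp with (2 := dyadic_scale_small (Rmin delta x0)
    ltac:(apply Rmin_glb_lt; lra)).
  intros m Hm; pose proof (Rmin_l delta x0); pose proof (Rmin_r delta x0).
  assert (HP : 0 < / 2 ^ m) by (apply Rinv_0_lt_compat, pow_lt; lra).
  destruct (dyadic_cell_inside (x0 - 3 / 2 ^ m) (x0 - 1 / 2 ^ m) m)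
    as [k [Hk [Ha Hb]]]; [unfold Rdiv in *; lra | unfold Rdiv in *; lra | lra |].
  exists k; split; [exact Hk|]; intros y Hy.
  apply (holder_increment_bound g x0 y alpha M); [exact Halpha| |].
  - rewrite Rabs_left by (unfold Rdiv in *; lra); unfold Rdiv in *; lra.
  - apply Hhol; unfold Rdiv in *; lra.
Qed.

Theorem mainTheorem4 : completely_non_Holder fFS.
Proof.
  intros [x0 [alpha [Halpha [[Hx Hhol] | [Hx Hhol]]]]].
  - destruct (holder_right_eventually_flat fFS alpha x0 Halpha Hx Hhol)
      as [M HM].
    exact (fFS_not_eventually_flat x0 alpha M Halpha HM).
  - destruct (holder_left_eventually_flat fFS alpha x0 Halpha Hx Hhol)
      as [M HM].
    exact (fFS_not_eventually_flat x0 alpha M Halpha HM).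
Qed.
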